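(* Let $R$ be a commutative ring with identity and let $M$ be a torsion-free unitary $R$-module. Then the following are equivalent: (1) $M$ is a Noetherian module; (2) $M$ is a $P$-Noetherian module for all prime ideals $P$ of $R$; (3) $M$ is an $\mathfrak{m}$-Noetherian module for all maximal ideals $\mathfrak{m}$ of $R$.
   Context: For a prime ideal $P$ of $R$ and $S=R\setminus P$, $M$ is $P$-Noetherian if every submodule $L$ of $M$ is $S$-finite, i.e. there exist $s\in S$ and a finitely generated submodule $F$ of $M$ with $Ls\subseteq F\subseteq L$. *)

From HB Require Import structures.
From mathcomp Require Import all_boot all_order all_algebra.
Set Implicit Arguments. Unset Strict Implicit. Unset Printing Implicit Defensive.
Import GRing.Theory.
Local Open Scope ring_scope.

Definition is_ideal (R : comNzRingType) (I : R -> Prop) : Prop :=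
  [/\ I 0, (forall a b, I a -> I b -> I (a + b)) & (forall r a, I a -> I (r * a))].

Definition is_prime_ideal (R : comNzRingType) (P : R -> Prop) : Prop :=
  [/\ is_ideal P, ~ P 1 & (forall a b, P (a * b) -> P a \/ P b)].

Definition is_maximal_ideal (R : comNzRingType) (m : R -> Prop) : Prop :=
  [/\ is_ideal m, ~ m 1 &
      (forall J : R -> Prop, is_ideal J -> (forall x, m x -> J x) ->
         (forall x, J x <-> m x) \/ J 1)].

Definition is_submodule (R : comNzRingType) (M : lmodType R) (L : M -> Prop) : Prop :=
  [/\ L 0, (forall x y, L x -> L y -> L (x + y)) & (forall r x, L x -> L (r *: x))].

Definition span_seq (R : comNzRingType) (M : lmodType R) (s : seq M) (x : M) : Prop :=
  exists c : 'I_(size s) -> R, x = \sum_(i < size s) c i *: s`_i.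

Definition fin_gen (R : comNzRingType) (M : lmodType R) (F : M -> Prop) : Prop :=
  exists s : seq M, forall x, F x <-> span_seq s x.

Definition noetherian_module (R : comNzRingType) (M : lmodType R) : Prop :=
  forall L : M -> Prop, is_submodule L -> fin_gen L.

(* L is S-finite for S = R \ P: there exist s in S and a finitely generated
   submodule F with L s ⊆ F ⊆ L. *)
Definition P_finite (R : comNzRingType) (M : lmodType R) (P : R -> Prop) (L : M -> Prop) : Prop :=
  exists s : R, ~ P s /\ exists F : M -> Prop,
    [/\ fin_gen F, (forall x, L x -> F (s *: x)) & (forall x, F x -> L x)].

Definition P_noetherian (R : comNzRingType) (M : lmodType R) (P : R -> Prop) : Prop :=
  forall L : M -> Prop, is_submodule L -> P_finite P L.

Definition torsion_free (R : comNzRingType) (M : lmodType R) : Prop :=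
  forall (r : R) (x : M), r *: x = 0 -> r = 0 \/ x = 0.

(* For a submodule L, the scalars r such that r L lies in a finitely generated
   submodule of L form an ideal J. If L is m-finite then J is not contained in
   m; if this holds for every maximal ideal m, then J is the whole ring by
   Krull's theorem, so 1 is in J and L is finitely generated. *)
From HB Require Import structures.
From mathcomp Require Import all_boot all_order all_algebra.
From mathcomp Require Import boolp classical_sets.
Set Implicit Arguments. Unset Strict Implicit.
Import GRing.Theory.
Local Open Scope classical_set_scope.
Local Open Scope ring_scope.

Section Ideals.
Variable R : comNzRingType.
Implicit Types (I K m : set R).

Lemma maximal_ideal_prime m : is_maximal_ideal m -> is_prime_ideal m.
Proof.
move=> [[m0 mD mM] m1 mmax]; split => // a b mab.
have [ma|nma] := pselect (m a); [by left | right].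
pose K x := exists r y, m y /\ x = r * a + y.
have Kid : is_ideal K.
  split.
  - by exists 0, 0; rewrite mul0r addr0.
  - move=> _ _ [r [y [my ->]]] [r' [y' [my' ->]]].
    by exists (r + r'), (y + y'); split; [exact: mD | rewrite mulrDl addrACA].
  - move=> r' _ [r [y [my ->]]].
    by exists (r' * r), (r' * y); split; [exact: mM | rewrite mulrDr mulrA].
have mK x : m x -> K x by exists 0, x; rewrite mul0r add0r.
have [mKeq|[r [y [my e]]]] := mmax K Kid mK.
  by exfalso; apply/nma/mKeq; exists 1, 0; rewrite mul1r addr0.
have -> : b = r * (a * b) + b * y by rewrite mulrA -(mulrC b) -mulrDr -e mulr1.
by apply: mD; apply: mM.
Qed.

Lemma is_ideal_bigcup (T : Type) (F : set T) (X : T -> set R) :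
  F !=set0 -> (forall i, F i -> is_ideal (X i)) ->
  (forall i j, F i -> F j -> X i `<=` X j \/ X j `<=` X i) ->
  is_ideal (\bigcup_(i in F) X i).
Proof.
move=> [i0 Fi0] Xid Xtot; split.
- by exists i0 => //; have [] := Xid i0 Fi0.
- move=> a b [i Fi Xia] [j Fj Xjb].
  have [Xij|Xji] := Xtot i j Fi Fj.
  + by exists j => //; have [_ XD _] := Xid j Fj; apply: XD => //; apply: Xij.
  + by exists i => //; have [_ XD _] := Xid i Fi; apply: XD => //; apply: Xji.
- move=> r a [i Fi Xia]; exists i => //.
  by have [_ _ XM] := Xid i Fi; apply: XM.
Qed.

Lemma ideal_sub_maximal I : is_ideal I -> ~ I 1 ->
  exists2 m, is_maximal_ideal m & I `<=` m.
Proof.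
move=> Iid I1.
pose T := {J : set R | [/\ is_ideal J, I `<=` J & ~ J 1]}.
pose le (A B : T) := `[< proj1_sig A `<=` proj1_sig B >].
pose I_elt : T := exist _ I (And3 Iid (@subset_refl _ I) I1).
have leP A B : reflect (proj1_sig A `<=` proj1_sig B) (le A B) by exact: asboolP.
have chain_ub (C : set T) : total_on C le -> exists B, forall A, C A -> le A B.
  move=> Ctot; have [[A0 CA0]|C0] := pselect (exists A, C A); last first.
    by exists I_elt => A CA; exfalso; apply: C0; exists A.
  pose U := \bigcup_(A in C) proj1_sig A.
  have Uid : is_ideal U.
    apply: is_ideal_bigcup; first by exists A0.
      by move=> A _; case: A => J [].
    by move=> A B CA CB; have [/leP|/leP] := Ctot A B CA CB; [left|right].
  have IU : I `<=` U.
    by move=> x Ix; exists A0 => //; case: (proj2_sig A0) => _ IA0 _; exact: IA0.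
  have U1 : ~ U 1 by move=> [A _]; case: A => J [].
  by exists (exist _ U (And3 Uid IU U1)) => A CA; apply/leP => x Ax; exists A.
have le_refl A : le A A by apply/leP.
have le_trans A B C : le A B -> le B C -> le A C.
  by move=> /leP AB /leP BC; apply/leP; exact: subset_trans AB BC.
have [[A [Aid IA A1]] Amax] := ZL_preorder I_elt le_refl le_trans chain_ub.
exists A => //; split => // K Kid AK.
have [K1|K1] := pselect (K 1); [by right | left].
pose K_elt : T := exist _ K (And3 Kid (subset_trans IA AK) K1).
have /leP KA : le K_elt (exist _ A (And3 Aid IA A1)) by apply: Amax; apply/leP.
by move=> x; split; [exact: KA | exact: AK].
Qed.

End Ideals.

Section Modules.
Variables (R : comNzRingType) (M : lmodType R).
Implicit Types (s t : seq M) (L : M -> Prop).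

Lemma span_seq_submodule s : is_submodule (span_seq s).
Proof.
split.
- by exists (fun _ => 0); rewrite big1 // => i _; rewrite scale0r.
- move=> _ _ [c ->] [d ->]; exists (fun i => c i + d i).
  by rewrite -big_split; apply: eq_bigr => i _; rewrite scalerDl.
- move=> r _ [c ->]; exists (fun i => r * c i).
  by rewrite scaler_sumr; apply: eq_bigr => i _; rewrite scalerA.
Qed.

Lemma mem_span_seq s x : x \in s -> span_seq s x.
Proof.
move=> xs; pose i := Ordinal (etrans (index_mem x s) xs).
exists (fun j => (j == i)%:R).
rewrite (bigD1 i) //= eqxx scale1r big1 ?addr0 ?nth_index // => j /negbTE->.
by rewrite scale0r.
Qed.

Lemma span_seq_min s L : is_submodule L ->
  (forall y, y \in s -> L y) -> forall x, span_seq s x -> L x.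
Proof.
move=> [L0 LD LZ] sL _ [c ->].
by apply: (big_ind L) => // i _; apply/LZ/sL/mem_nth.
Qed.

Lemma span_seq_catl s t x : span_seq s x -> span_seq (s ++ t) x.
Proof.
apply: span_seq_min; first exact: span_seq_submodule.
by move=> y ys; apply: mem_span_seq; rewrite mem_cat ys.
Qed.

Lemma span_seq_catr s t x : span_seq t x -> span_seq (s ++ t) x.
Proof.
apply: span_seq_min; first exact: span_seq_submodule.
by move=> y yt; apply: mem_span_seq; rewrite mem_cat yt orbT.
Qed.

Definition fin_gen_conductor L (r : R) : Prop :=
  exists t, (forall y, y \in t -> L y) /\ (forall x, L x -> span_seq t (r *: x)).

Lemma fin_gen_conductor_ideal L : is_ideal (fin_gen_conductor L).
Proof.
split.
- exists [::]; split => // x _; rewrite scale0r.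
  by have [] := span_seq_submodule [::].
- move=> a b [s [sL Ls]] [t [tL Lt]]; exists (s ++ t); split.
    by move=> y; rewrite mem_cat => /orP[/sL|/tL].
  move=> x Lx; rewrite scalerDl; have [_ spanD _] := span_seq_submodule (s ++ t).
  by apply: spanD; [apply/span_seq_catl/Ls | apply/span_seq_catr/Lt].
- move=> r a [t [tL Lt]]; exists t; split => // x Lx; rewrite -scalerA.
  by have [_ _ spanZ] := span_seq_submodule t; apply/spanZ/Lt.
Qed.

Lemma fin_gen_conductor1 L : is_submodule L -> fin_gen_conductor L 1 -> fin_gen L.
Proof.
move=> Lsub [t [tL Lt]]; exists t => x; split; last exact: span_seq_min.
by move/Lt; rewrite scale1r.
Qed.

Lemma P_finite_conductor (P : R -> Prop) L :
  P_finite P L -> exists2 r, ~ P r & fin_gen_conductor L r.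
Proof.
move=> [r [Pr [F [[t Ft] LF FL]]]]; exists r => //; exists t; split.
  by move=> y yt; apply/FL/Ft/mem_span_seq.
by move=> x /LF /Ft.
Qed.

Lemma noetherian_P_noetherian (P : R -> Prop) :
  noetherian_module M -> ~ P 1 -> P_noetherian M P.
Proof.
move=> MN P1 L Lsub; exists 1; split => //.
by exists L; split => // [|x Lx]; [exact: MN | rewrite scale1r].
Qed.

Lemma maximal_noetherian :
  (forall m, is_maximal_ideal m -> P_noetherian M m) -> noetherian_module M.
Proof.
move=> MmN L Lsub.
have [J1|J1] := pselect (fin_gen_conductor L 1); first exact: fin_gen_conductor1.
have [m mmax Jm] := ideal_sub_maximal (fin_gen_conductor_ideal L) J1.
have [r mr Jr] := P_finite_conductor (MmN m mmax L Lsub).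
by case: mr; exact: Jm.
Qed.

End Modules.

Theorem proposition2p3 (R : comNzRingType) (M : lmodType R) :
  torsion_free M ->
  (noetherian_module M <->
     (forall P : R -> Prop, is_prime_ideal P -> P_noetherian M P)) /\
  ((forall P : R -> Prop, is_prime_ideal P -> P_noetherian M P) <->
     (forall m : R -> Prop, is_maximal_ideal m -> P_noetherian M m)).
Proof.
move=> _.
have prime_maximal (MpN : forall P, is_prime_ideal P -> P_noetherian M P) m :
    is_maximal_ideal m -> P_noetherian M m.
  by move/maximal_ideal_prime; apply: MpN.
have noetherian_prime (MN : noetherian_module M) P :
    is_prime_ideal P -> P_noetherian M P.
  by move=> [_ P1 _]; exact: noetherian_P_noetherian.
split; split.
- exact: noetherian_prime.
- by move/prime_maximal; exact: maximal_noetherian.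
- exact: prime_maximal.
- by move/maximal_noetherian; exact: noetherian_prime.
Qed.
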